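(* Let $p$ be a prime, $m$ a positive integer, $q=p^m$, and let $l,s$ be positive integers with $q-1=ls$; let $r$ be a positive integer. Let $\gamma$ be a primitive element of $\mathbb{F}_q$, $\xi=\gamma^s$, $f\in\mathbb{F}_q[x]$, and $A_i=f(\xi^i)$ for $0\le i\le l-1$. If $P(x)=x^rf(x^s)$ is a permutation polynomial of $\mathbb{F}_q$, then $l \mid 2\,\mathrm{Ind}_\gamma(A_0A_1\cdots A_{l-1})$.
   Context: A permutation polynomial of $\mathbb{F}_q$ is a polynomial inducing a bijection $\mathbb{F}_q\to\mathbb{F}_q$. For nonzero $a\in\mathbb{F}_q$, $\mathrm{Ind}_\gamma(a)$ denotes the residue class $b \bmod (q-1)$ with $a=\gamma^b$; since $l\mid q-1$, divisibility of $\mathrm{Ind}_\gamma(a)$ (or of a multiple of it) by $l$ is well defined. (When $P$ is a permutation polynomial all $A_i$ are nonzero, so the index is defined.) *)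

From HB Require Import structures.
From mathcomp Require Import all_boot all_order all_algebra all_field.
Set Implicit Arguments. Unset Strict Implicit. Unset Printing Implicit Defensive.
Import GRing.Theory.
Local Open Scope ring_scope.

Definition primitive_elt (F : finFieldType) (g : F) : bool :=
  (#|F|.-1).-primitive_root g.

(* Ind_g(a): the least b in [0, q-1) with g ^+ b = a (the canonical
   representative of the residue class mod q-1). *)
Definition Ind (F : finFieldType) (g a : F) : nat :=
  find (fun b : nat => g ^+ b == a) (iota 0 (#|F|.-1)).

Definition perm_poly (F : finFieldType) (P : {poly F}) : Prop :=
  bijective (fun x : F => P.[x]).

From HB Require Import structures.
From mathcomp Require Import all_boot all_order all_algebra all_field.
Set Implicit Arguments.
Unset Strict Implicit.
Unset Printing Implicit Defensive.
Import GRing.Theory.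
Local Open Scope ring_scope.

(* Let W be the product of all nonzero elements of F_q; W^2 = 1 because x |-> x^-1
   permutes F_q^*.  As P(0) = 0, P permutes F_q^*, so W = prod P(x) = W^r B with
   B = prod_{x <> 0} f(x^s), whence B^2 = 1.  Writing x = g^k, the values x^s run
   through xi^0, ..., xi^(l-1), each s times, so B = A^s with A = A_0 ... A_(l-1).
   Thus g^(2 s Ind A) = A^(2s) = 1, i.e. l s | 2 s Ind A. *)

Lemma prodr_periodic (R : comNzRingType) (G : nat -> R) (l n : nat) :
  (forall k, G (k + l)%N = G k) ->
  \prod_(0 <= k < l * n) G k = (\prod_(0 <= k < l) G k) ^+ n.
Proof.
move=> Gper.
have GperM j k : G (k + l * j)%N = G k.
  by elim: j k => [|j IHj] k; rewrite ?muln0 ?addn0 // mulnS addnA IHj Gper.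
elim: n => [|n IHn]; first by rewrite muln0 big_geq.
rewrite mulnSr (@big_cat_nat _ _ _ (l * n)) ?leq_addr //= IHn exprSr.
congr (_ * _); rewrite -{1}(add0n (l * n)%N) big_addn addKn.
by apply: eq_bigr => k _; rewrite GperM.
Qed.

Section NonzeroProducts.

Variable F : finFieldType.

Lemma expf_card_pred (x : F) : x != 0 -> x ^+ #|F|.-1 = 1.
Proof.
move=> x_neq0; apply: (mulIf x_neq0).
by rewrite -exprSr prednK ?expf_card ?mul1r // (cardD1 0).
Qed.

Lemma prod_nonzero_inj (h : F -> F) :
  injective h -> h 0 = 0 ->
  \prod_(x : F | x != 0) h x = \prod_(x : F | x != 0) x.
Proof.
move=> h_inj h0; rewrite [RHS](reindex_inj h_inj); apply: eq_bigl => x /=.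
by rewrite -{2}h0 (inj_eq h_inj).
Qed.

Lemma prod_nonzero_sqr : (\prod_(x : F | x != 0) x) ^+ 2 = 1.
Proof.
have W_inv : (\prod_(x : F | x != 0) x)^-1 = \prod_(x : F | x != 0) x.
  by rewrite -prodfV; apply: prod_nonzero_inj; [apply: invr_inj | apply: invr0].
by rewrite expr2 -{1}W_inv mulVf //; apply/prodf_neq0.
Qed.

Lemma prod_nonzero_sqr_of_bij (r : nat) (h : F -> F) :
  (0 < r)%N -> bijective (fun x => x ^+ r * h x) ->
  (\prod_(x : F | x != 0) h x) ^+ 2 = 1.
Proof.
move=> r_gt0 /bij_inj P_inj.
set W := \prod_(x : F | x != 0) x; set B := \prod_(x : F | x != 0) h x.
have W_eq : W = W ^+ r * B.
  rewrite /W /B -prodrXl -big_split /=; symmetry.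
  by apply: prod_nonzero_inj P_inj _; rewrite expr0n gtn_eqF ?mul0r.
have : (W ^+ r * B) ^+ 2 = W ^+ 2 by rewrite -W_eq.
by rewrite exprMn -exprM mulnC exprM prod_nonzero_sqr expr1n mul1r.
Qed.

Variable g : F.
Hypothesis g_prim : primitive_elt g.

Lemma prod_nonzero_primitive (H : F -> F) :
  \prod_(x : F | x != 0) H x = \prod_(k < #|F|.-1) H (g ^+ k).
Proof.
rewrite -(big_mkord xpredT (fun k => H (g ^+ k))) /index_iota subn0.
rewrite -(big_map (fun k => g ^+ k) xpredT) -[LHS]big_filter.
apply: perm_big; apply: uniq_perm.
- by rewrite filter_uniq // index_enum_uniq.
- rewrite map_inj_in_uniq ?iota_uniq // => i j.
  rewrite !mem_iota !add0n => i_lt j_lt /eqP.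
  by rewrite (eq_prim_root_expr g_prim) !modn_small // => /eqP.
move=> x; rewrite mem_filter mem_index_enum andbT; apply/idP/mapP.
- move=> /expf_card_pred /(prim_rootP g_prim) [i ->].
  by exists (nat_of_ord i); rewrite // mem_iota add0n ltn_ord.
- move=> [k _ ->]; rewrite expf_neq0 //; apply/eqP => g0.
  have := prim_expr_order g_prim; rewrite g0 expr0n eqn0Ngt (prim_order_gt0 g_prim) /=.
  by move/eqP; rewrite eq_sym oner_eq0.
Qed.

Lemma prod_nonzero_comp_expr (l s : nat) (H : F -> F) :
  #|F|.-1 = (l * s)%N ->
  \prod_(x : F | x != 0) H (x ^+ s) = (\prod_(i < l) H ((g ^+ s) ^+ i)) ^+ s.
Proof.
move=> card_ls; rewrite prod_nonzero_primitive card_ls.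
rewrite -(big_mkord xpredT (fun k => H ((g ^+ k) ^+ s))).
under eq_bigr => k _ do rewrite -exprM mulnC exprM.
rewrite prodr_periodic ?big_mkord // => k.
by rewrite exprD -!exprM (mulnC s l) -card_ls (prim_expr_order g_prim) mulr1.
Qed.

Lemma expr_Ind (a : F) : a != 0 -> g ^+ Ind g a = a.
Proof.
move=> /expf_card_pred /(prim_rootP g_prim) [i a_eq].
have has_a : has (fun b : nat => g ^+ b == a) (iota 0 #|F|.-1).
  by apply/hasP; exists (nat_of_ord i); rewrite ?mem_iota ?ltn_ord ?a_eq.
have := nth_find 0 has_a; rewrite nth_iota ?add0n => [/eqP //|].
by move: has_a; rewrite has_find size_iota.
Qed.

Lemma dvdn_Ind_mul (a : F) (n : nat) :
  a != 0 -> a ^+ n = 1 -> (#|F|.-1 %| Ind g a * n)%N.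
Proof. by move=> a_neq0 an1; rewrite (prim_order_dvd g_prim) exprM expr_Ind // an1. Qed.

End NonzeroProducts.

Theorem theorem2p1 (F : finFieldType) (p m l s r : nat) (g : F) (f : {poly F}) :
  prime p -> (0 < m)%N -> #|F| = (p ^ m)%N ->
  (0 < l)%N -> (0 < s)%N -> (#|F|.-1 = l * s)%N -> (0 < r)%N ->
  primitive_elt g ->
  perm_poly ('X^r * (f \Po 'X^s)) ->
  (l %| 2 * Ind g (\prod_(i < l) f.[(g ^+ s) ^+ i])%R)%N.
Proof.
move=> _ _ _ _ s_gt0 card_ls r_gt0 g_prim P_bij.
set A := \prod_(i < l) _.
have P_eval x : ('X^r * (f \Po 'X^s)).[x] = x ^+ r * f.[x ^+ s].
  by rewrite hornerM hornerXn horner_comp hornerXn.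
have /(prod_nonzero_sqr_of_bij r_gt0) : bijective (fun x => x ^+ r * f.[x ^+ s]).
  exact: (eq_bij P_bij P_eval).
rewrite (prod_nonzero_comp_expr g_prim (fun y => f.[y]) card_ls) -/A -exprM.
move=> A_2s; have A_neq0 : A != 0.
  by apply: contra_eq_neq A_2s => ->; rewrite expr0n muln_eq0 gtn_eqF // eq_sym oner_eq0.
have := dvdn_Ind_mul g_prim A_neq0 A_2s.
by rewrite card_ls (mulnC s 2%N) mulnA (mulnC _ 2%N) dvdn_pmul2r.
Qed.
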